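(* Assume Assumption 1 and Assumption 2 with $\delta>1/10$. For any distinct $u,u_1,u_2\in L$, as $n_R\to\infty$, $$\Pr[(u,u_1)\in E,\ (u,u_2)\in E\mid S_L,S_R]=\left(1+\frac{M_{R1}M_{R3}}{M_{R2}^2}\cdot\frac1{w_u}\right)p_{uu_1}p_{uu_2}\,(1+o(1)),$$ where $p_{xy}=\frac{M_{R2}}{M_{R1}^2}\cdot\frac{w_xw_y}{n_R}$.
   Context: Model: left nodes $L$ ($|L|=n_L$), right nodes $R$ ($|R|=n_R$), weight sequences $S_L=(w_u)_{u\in L}$, $S_R=(w_v)_{v\in R}$ of positive reals; $M_{Lk}=\frac1{n_L}\sum_{u\in L}w_u^k$, $M_{Rk}=\frac1{n_R}\sum_{v\in R}w_v^k$. The random bipartite graph $G_b=(L\sqcup R,E_b)$ contains each edge $(u,v)$, $u\in L$, $v\in R$, independently with probability $\min\left(\frac{w_uw_v}{n_RM_{R1}},1\right)$. The projected graph is $G=(L,E)$ with $(u,u')\in E$ for distinct $u,u'\in L$ iff there is $z\in R$ with $(u,z),(u',z)\in E_b$. Assumption 1: $\frac{w_uw_v}{n_RM_{R1}}\le1$ for all $u\in L,v\in R$. Assumption 2 (parameter $\delta>0$), as $n_L,n_R\to\infty$: $\max(S_L\cup S_R)=O(n_R^{1/2-\delta})$, $\min S_L=\Omega(1)$, $M_{R2}=O(M_{R1}^2)$, $M_{R4}=O(n_R^{1-2\delta})$. *)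

From HB Require Import structures.
From mathcomp Require Import all_boot all_order all_algebra.
From mathcomp Require Import all_classical all_reals all_analysis.
Set Implicit Arguments. Unset Strict Implicit. Unset Printing Implicit Defensive.
Import Order.TTheory GRing.Theory Num.Theory.
Local Open Scope ring_scope.

Section BipartiteModel.
Variable R : realType.

Definition moment (n : nat) (w : 'I_n -> R) (k : nat) : R :=
  (\sum_(i < n) w i ^+ k) / n%:R.

Variables (nL nR : nat) (wL : 'I_nL -> R) (wR : 'I_nR -> R).

Definition p_edge (u : 'I_nL) (v : 'I_nR) : R :=
  Num.min (wL u * wR v / (nR%:R * moment wR 1)) 1.

(* a realisation of the random bipartite graph G_b: its edge indicator *)
Definition bip_graph := {ffun 'I_nL * 'I_nR -> bool}.

Definition bip_weight (g : bip_graph) : R :=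
  \prod_(e : 'I_nL * 'I_nR)
     (if g e then p_edge e.1 e.2 else 1 - p_edge e.1 e.2).

Definition proj_edge (g : bip_graph) (x y : 'I_nL) : bool :=
  (x != y) && [exists z : 'I_nR, g (x, z) && g (y, z)].

Definition two_edge_prob (u u1 u2 : 'I_nL) : R :=
  \sum_(g : bip_graph | proj_edge g u u1 && proj_edge g u u2) bip_weight g.

Definition p_pair (x y : 'I_nL) : R :=
  moment wR 2 / (moment wR 1) ^+ 2 * (wL x * wL y / nR%:R).

Definition two_edge_approx (u u1 u2 : 'I_nL) : R :=
  (1 + moment wR 1 * moment wR 3 / (moment wR 2) ^+ 2 * (1 / wL u))
  * p_pair u u1 * p_pair u u2.

End BipartiteModel.

From HB Require Import structures.
From mathcomp Require Import all_boot all_order all_algebra.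
From mathcomp Require Import all_classical all_reals all_analysis.
From mathcomp Require Import ring lra zify.
Set Implicit Arguments. Unset Strict Implicit. Unset Printing Implicit Defensive.
Import Order.TTheory GRing.Theory Num.Theory.
Import numFieldNormedType.Exports.
Local Open Scope classical_set_scope.
Local Open Scope ring_scope.

(* Let N_v be the number of common right neighbours of u and v in G_b, so
   that (u,v) is an edge of the projected graph iff N_v > 0.  Writing
   X = E[N_x], Y = E[N_y] and T = sum_z p(u,z) p(x,z) p(y,z), we prove the
   non-asymptotic sandwich
       (XY + T) (1 - X - Y - 2m) <= Pr[(u,x), (u,y) in E] <= XY + T,
   where m bounds the edge probabilities at u:
   - the upper bound is 1[N_x > 0, N_y > 0] <= N_x N_y in expectation;
   - the lower bound is the pointwise inequality
       4ab <= 2 1[a > 0, b > 0] + a^2 b + a b^2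
     combined with the exact second moment and a bound on the third mixed
     moments of the codegrees.
   Under Assumption 1 the edge probabilities are exactly w_u w_z / (n_R M_R1),
   XY + T is the paper's approximation, and X, Y, m^2 are all of the form
   w_a w_b M_R2 / (n_R M_R1^2) = O(n_R^(-2 delta)) by Assumption 2.  Hence the
   ratio lies in [1 - o(1), 1] and tends to 1. *)

Section BernoulliProduct.
Variables (R : realType) (T : finType) (p : T -> R).
Local Notation config := {ffun T -> bool}.

Definition bern_weight (g : config) : R :=
  \prod_e (if g e then p e else 1 - p e).

Definition expect (F : config -> R) : R := \sum_g bern_weight g * F g.

Definition all_on (s : seq T) (g : config) : R := (all g s)%:R.

Lemma all_onM (s t : seq T) (g : config) : all_on s g * all_on t g = all_on (s ++ t) g.
Proof. by rewrite /all_on all_cat; case: (all g s); case: (all g t); rewrite ?mul1r ?mul0r. Qed.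

Lemma all_on_idem (s : seq T) (g : config) : all_on s g * all_on s g = all_on s g.
Proof. by rewrite /all_on; case: (all g s); rewrite ?mul1r ?mul0r. Qed.

(* Independence: the probability that all elements of s are present is the
   product of their probabilities (each distinct element counted once). *)
Lemma expect_all_on (s : seq T) : expect (all_on s) = \prod_(e in s) p e.
Proof.
have split_weight g : bern_weight g * all_on s g =
    \prod_e ((if g e then p e else 1 - p e) * (if e \in s then (g e)%:R else 1)).
  rewrite big_split /=; congr (_ * _); rewrite -big_mkcond /=.
  rewrite /all_on; case: (boolP (all g s)) => [/allP gs | /allPn [e es nge]].
    by rewrite big1 // => e /gs ->.
  by rewrite (bigD1 e) //= (negbTE nge) mul0r.
rewrite /expect (eq_bigr _ (fun g _ => split_weight g)).
rewrite -(bigA_distr_bigA (fun e (b : bool) =>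
  (if b then p e else 1 - p e) * (if e \in s then (b : nat)%:R else 1))) /=.
rewrite [RHS]big_mkcond; apply: eq_bigr => e _.
by rewrite big_bool /=; case: (e \in s); rewrite /= ?mulr1 ?mulr0 ?addr0 // addrC subrK.
Qed.

Lemma eq_expect (F H : config -> R) : F =1 H -> expect F = expect H.
Proof. by move=> FH; apply: eq_bigr => g _; rewrite FH. Qed.

Lemma expectB (F H : config -> R) :
  expect (fun g => F g - H g) = expect F - expect H.
Proof. by rewrite /expect -sumrB; apply: eq_bigr => g _; rewrite mulrBr. Qed.

Lemma expectZ (c : R) (F : config -> R) : expect (fun g => c * F g) = c * expect F.
Proof. by rewrite /expect mulr_sumr; apply: eq_bigr => g _; rewrite mulrCA. Qed.

Lemma expect_sum (I : finType) (F : I -> config -> R) :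
  expect (fun g => \sum_i F i g) = \sum_i expect (F i).
Proof. by rewrite /expect; under eq_bigr do rewrite mulr_sumr; exact: exchange_big. Qed.

Hypothesis p01 : forall e, 0 <= p e <= 1.

Lemma bern_weight_ge0 g : 0 <= bern_weight g.
Proof.
by apply: prodr_ge0 => e _; case/andP: (p01 e) => p0 p1; case: (g e); rewrite ?subr_ge0.
Qed.

Lemma ler_expect (F H : config -> R) : (forall g, F g <= H g) -> expect F <= expect H.
Proof. by move=> FH; apply: ler_sum => g _; rewrite ler_wpM2l ?bern_weight_ge0. Qed.

Lemma expect_all_on_uniq (s s' : seq T) : uniq s' -> s =i s' ->
  expect (all_on s) = \prod_(e <- s') p e.
Proof.
by move=> us' ss'; rewrite expect_all_on big_uniq //; apply: eq_bigl => e; rewrite ss'.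
Qed.

Lemma expect_all_on_le (s s' : seq T) : uniq s' -> {subset s' <= s} ->
  expect (all_on s) <= \prod_(e <- s') p e.
Proof.
move=> us' ss'; rewrite expect_all_on big_uniq // (bigID (mem s')) /=.
rewrite (eq_bigl (mem s')) => [|e]; last by rewrite andb_idl // => /ss'.
apply: ler_piMr; first by apply: prodr_ge0 => e _; case/andP: (p01 e).
by apply: prodr_ile1 => e _; exact: p01.
Qed.

End BernoulliProduct.

Lemma ler_sum_cond (R : realType) (I : finType) (P : pred I) (F : I -> R) :
  (forall i, 0 <= F i) -> \sum_(i | P i) F i <= \sum_i F i.
Proof. by move=> F0; rewrite big_mkcond; apply: ler_sum => i _; case: (P i). Qed.

Lemma indicator_le_prod (a b : nat) : ((0 < a) && (0 < b) <= a * b)%N.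
Proof. by case: a => [|a]; case: b => [|b] //=; lia. Qed.

Lemma indicator_ge_cubic (a b : nat) :
  (4 * (a * b) <= 2 * ((0 < a) && (0 < b)) + a * a * b + a * b * b)%N.
Proof. by case: a => [|[|[|a]]]; case: b => [|[|[|b]]] //=; nia. Qed.

(* Closing uniq-goals on explicit lists of edges (v, z) from the
   disequalities between vertices available in the context. *)
Ltac neq_simpl := repeat match goal with
  | h : is_true (?a != ?b) |- context [?a == ?b] => rewrite (negbTE h)
  | h : is_true (?a != ?b) |- context [?b == ?a] => rewrite [b == a]eq_sym (negbTE h)
  end.

Ltac edges_uniq := rewrite /= !inE !xpair_eqE !eqxx; neq_simpl; rewrite ?andbF ?andbT ?orbF.

Section CommonNeighbours.
Variables (R : realType) (nL nR : nat) (wL : 'I_nL -> R) (wR : 'I_nR -> R).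
Local Notation graph := (bip_graph nL nR).

(* G_b is the product of Bernoulli(edge_prob e) over all pairs e. *)
Definition edge_prob (e : 'I_nL * 'I_nR) : R := p_edge wL wR e.1 e.2.
Local Notation p := edge_prob.
Local Notation E := (expect p).
Hypothesis p01 : forall e, 0 <= p e <= 1.

Variable u : 'I_nL.

Definition common (v : 'I_nL) (z : 'I_nR) : graph -> R := all_on R [:: (u, z); (v, z)].
Definition codeg (v : 'I_nL) (g : graph) : R := \sum_z common v z g.
Definition co_prob (v : 'I_nL) (z : 'I_nR) : R := p (u, z) * p (v, z).

Definition pair_mass (v : 'I_nL) : R := \sum_z co_prob v z.
Definition triple_mass (v w : 'I_nL) : R := \sum_z co_prob v z * p (w, z).
Definition defect (v w : 'I_nL) : R := \sum_z p (u, z) * co_prob v z * p (w, z).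

Lemma p_ge0 e : 0 <= p e. Proof. by case/andP: (p01 e). Qed.

Lemma co_prob_ge0 v z : 0 <= co_prob v z.
Proof. by rewrite mulr_ge0 ?p_ge0. Qed.

Lemma pair_mass_ge0 v : 0 <= pair_mass v.
Proof. by apply: sumr_ge0 => z _; exact: co_prob_ge0. Qed.

Lemma triple_mass_ge0 v w : 0 <= triple_mass v w.
Proof. by apply: sumr_ge0 => z _; rewrite mulr_ge0 ?co_prob_ge0 ?p_ge0. Qed.

Lemma triple_massC v w : triple_mass v w = triple_mass w v.
Proof. by apply: eq_bigr => z _; rewrite /co_prob mulrAC. Qed.

Lemma defect_ge0 v w : 0 <= defect v w.
Proof. by apply: sumr_ge0 => z _; rewrite !mulr_ge0 ?co_prob_ge0 ?p_ge0. Qed.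

Lemma defect_le v w (m : R) : (forall z, p (u, z) <= m) -> defect v w <= m * triple_mass v w.
Proof.
move=> pm; rewrite /defect /triple_mass mulr_sumr; apply: ler_sum => z _.
by rewrite -!mulrA ler_wpM2r ?mulr_ge0 ?co_prob_ge0 ?p_ge0.
Qed.

Lemma expect_common2 v w z1 z2 : u != v -> u != w -> z1 != z2 ->
  E (fun g => common v z1 g * common w z2 g) = co_prob v z1 * co_prob w z2.
Proof.
move=> uv uw z12; under eq_expect => g do rewrite all_onM.
rewrite (@expect_all_on_uniq _ _ _ _ [:: (u, z1); (v, z1); (u, z2); (w, z2)]) //.
  by rewrite !big_cons big_nil /co_prob; ring.
by edges_uniq.
Qed.

Lemma expect_common_diag v w z : u != v -> u != w -> v != w ->
  E (fun g => common v z g * common w z g) = co_prob v z * p (w, z).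
Proof.
move=> uv uw vw; under eq_expect => g do rewrite all_onM.
rewrite (@expect_all_on_uniq _ _ _ _ [:: (u, z); (v, z); (w, z)]).
- by rewrite !big_cons big_nil /co_prob; ring.
- by edges_uniq.
- by move=> e; rewrite !inE; do ! case: (_ == _).
Qed.

(* Bound a joint probability by the product over a duplicate-free list of
   edges that all occur in it. *)
Ltac edge_product_bound :=
  under eq_expect => g do rewrite !all_onM;
  apply: (expect_all_on_le p01);
  [edges_uniq | by move=> e; rewrite !inE; do ! case: (_ == _)].

Lemma expect_common3_left v w z1 z2 : u != v -> u != w -> v != w -> z1 != z2 ->
  E (fun g => common v z1 g * common v z2 g * common w z1 g)
  <= co_prob v z1 * co_prob v z2 * p (w, z1).
Proof.
move=> uv uw vw z12.
have -> : co_prob v z1 * co_prob v z2 * p (w, z1) =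
    \prod_(e <- [:: (u, z1); (v, z1); (w, z1); (u, z2); (v, z2)]) p e.
  by rewrite !big_cons big_nil /co_prob; ring.
by edge_product_bound.
Qed.

Lemma expect_common3_right v w z1 z2 : u != v -> u != w -> v != w -> z1 != z2 ->
  E (fun g => common v z1 g * common v z2 g * common w z2 g)
  <= co_prob v z1 * co_prob v z2 * p (w, z2).
Proof.
move=> uv uw vw z12.
have -> : co_prob v z1 * co_prob v z2 * p (w, z2) =
    \prod_(e <- [:: (u, z1); (v, z1); (u, z2); (v, z2); (w, z2)]) p e.
  by rewrite !big_cons big_nil /co_prob; ring.
by edge_product_bound.
Qed.

Lemma expect_common3_apart v w z1 z2 z3 :
    u != v -> u != w -> z1 != z2 -> z3 != z1 -> z3 != z2 ->
  E (fun g => common v z1 g * common v z2 g * common w z3 g)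
  <= co_prob v z1 * co_prob v z2 * co_prob w z3.
Proof.
move=> uv uw z12 z31 z32.
have -> : co_prob v z1 * co_prob v z2 * co_prob w z3 =
    \prod_(e <- [:: (u, z1); (v, z1); (u, z2); (v, z2); (u, z3); (w, z3)]) p e.
  by rewrite !big_cons big_nil /co_prob; ring.
by edge_product_bound.
Qed.

(* Second mixed moment of the codegrees: a sum over pairs of right
   vertices, where only the diagonal pairs share edges. *)
Lemma expect_codeg_prod v w : u != v -> u != w -> v != w ->
  E (fun g => codeg v g * codeg w g)
  = pair_mass v * pair_mass w + triple_mass v w - defect v w.
Proof.
move=> uv uw vw.
rewrite (@eq_expect _ _ p _ (fun g => \sum_z1 \sum_z2 common v z1 g * common w z2 g));
  last by move=> g; rewrite /codeg mulr_suml; apply: eq_bigr => z1 _; rewrite mulr_sumr.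
rewrite expect_sum; under eq_bigr do rewrite expect_sum.
rewrite /pair_mass /triple_mass /defect mulr_suml -big_split -sumrB /=.
apply: eq_bigr => z1 _; rewrite (bigD1 z1) //= expect_common_diag //.
rewrite (eq_bigr (fun z2 => co_prob v z1 * co_prob w z2)) => [|z2 z21]; last first.
  by apply: expect_common2; rewrite // eq_sym.
rewrite [in RHS](bigD1 z1) //= -mulr_sumr /co_prob; ring.
Qed.

Lemma cubic_row_diag v w z1 : u != v -> u != w -> v != w ->
  \sum_z3 E (fun g => common v z1 g * common v z1 g * common w z3 g)
  <= co_prob v z1 * (p (w, z1) + pair_mass w).
Proof.
move=> uv uw vw.
rewrite (eq_bigr (fun z3 => E (fun g => common v z1 g * common w z3 g))) => [|z3 _]; last first.
  by apply: eq_expect => g; rewrite /common all_on_idem.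
rewrite (bigD1 z1) //= expect_common_diag // mulrDr lerD2l.
rewrite (eq_bigr (fun z3 => co_prob v z1 * co_prob w z3)) => [|z3 z31]; last first.
  by apply: expect_common2; rewrite // eq_sym.
by rewrite -mulr_sumr ler_wpM2l ?co_prob_ge0 // ler_sum_cond // => z; exact: co_prob_ge0.
Qed.

Lemma cubic_row_off v w z1 z2 : u != v -> u != w -> v != w -> z2 != z1 ->
  \sum_z3 E (fun g => common v z1 g * common v z2 g * common w z3 g)
  <= co_prob v z1 * co_prob v z2 * (p (w, z1) + p (w, z2) + pair_mass w).
Proof.
move=> uv uw vw z21; have z12 : z1 != z2 by rewrite eq_sym.
rewrite (bigD1 z1) //= (bigD1 z2) //= addrA !mulrDr.
apply: lerD; first apply: lerD.
- exact: expect_common3_left.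
- exact: expect_common3_right.
apply: le_trans (_ : _ <= \sum_(z3 | (z3 != z1) && (z3 != z2))
  co_prob v z1 * co_prob v z2 * co_prob w z3) _.
  by apply: ler_sum => z3 /andP[z31 z32]; exact: expect_common3_apart.
rewrite -mulr_sumr ler_wpM2l ?mulr_ge0 ?p_ge0 //.
by apply: ler_sum_cond => z; exact: co_prob_ge0.
Qed.

Lemma cubic_row v w z1 : u != v -> u != w -> v != w ->
  \sum_z2 \sum_z3 E (fun g => common v z1 g * common v z2 g * common w z3 g)
  <= co_prob v z1 * p (w, z1) * (1 + pair_mass v)
     + co_prob v z1 * (pair_mass w + triple_mass v w + pair_mass v * pair_mass w).
Proof.
move=> uv uw vw; rewrite (bigD1 z1) //=.
have off_diag : \sum_(z2 | z2 != z1) \sum_z3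
      E (fun g => common v z1 g * common v z2 g * common w z3 g)
    <= \sum_z2 co_prob v z1 * co_prob v z2 * (p (w, z1) + p (w, z2) + pair_mass w).
  apply: le_trans (ler_sum_cond _ _) => [|z2]; last first.
    by rewrite !mulr_ge0 ?addr_ge0 ?co_prob_ge0 ?p_ge0 ?pair_mass_ge0.
  by apply: ler_sum => z2 z21; exact: cubic_row_off.
apply: le_trans (lerD (cubic_row_diag z1 uv uw vw) off_diag) _.
have -> : \sum_z2 co_prob v z1 * co_prob v z2 * (p (w, z1) + p (w, z2) + pair_mass w)
    = co_prob v z1 * (p (w, z1) * pair_mass v + triple_mass v w + pair_mass v * pair_mass w).
  rewrite (eq_bigr (fun z2 => co_prob v z1 * p (w, z1) * co_prob v z2
    + co_prob v z1 * (co_prob v z2 * p (w, z2)) + co_prob v z1 * pair_mass w * co_prob v z2));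
    last by move=> z2 _; ring.
  by rewrite !big_split /= -!mulr_sumr -/(pair_mass v) -/(triple_mass v w); ring.
lra.
Qed.

(* Third mixed moment of the codegrees, bounded by expanding the triple
   sum over right vertices (z1, z2, z3) according to coincidences. *)
Lemma expect_codeg_cubic v w : u != v -> u != w -> v != w ->
  E (fun g => codeg v g ^+ 2 * codeg w g)
  <= (pair_mass v * pair_mass w + triple_mass v w) * (1 + 2 * pair_mass v).
Proof.
move=> uv uw vw.
rewrite (@eq_expect _ _ p _ (fun g => \sum_z1 \sum_z2 \sum_z3
    common v z1 g * common v z2 g * common w z3 g)); last first.
  move=> g; rewrite expr2 /codeg !mulr_suml; apply: eq_bigr => z1 _.
  by rewrite -mulrA mulr_suml mulr_sumr; apply: eq_bigr => z2 _; rewrite mulrA mulr_sumr.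
rewrite expect_sum; under eq_bigr do rewrite expect_sum.
under eq_bigr do under eq_bigr do rewrite expect_sum.
apply: le_trans (ler_sum _ (fun z1 _ => cubic_row z1 uv uw vw)) _.
rewrite big_split /= -!mulr_suml -/(triple_mass v w) -/(pair_mass v).
have := pair_mass_ge0 v; have := pair_mass_ge0 w; have := triple_mass_ge0 v w.
move: (pair_mass v) (pair_mass w) (triple_mass v w) => a b t t0 b0 a0.
have : 0 <= a * a * b by rewrite !mulr_ge0.
nra.
Qed.

Lemma codeg_card v g : codeg v g = #|[pred z | g (u, z) && g (v, z)]|%:R.
Proof.
rewrite /codeg -sum1_card natr_sum [RHS]big_mkcond /=; apply: eq_bigr => z _.
by rewrite /common /all_on /= andbT inE; case: (_ && _).
Qed.

Lemma proj_edge_card v (g : graph) : u != v ->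
  proj_edge g u v = (0 < #|[pred z | g (u, z) && g (v, z)]|)%N.
Proof.
move=> uv; rewrite /proj_edge uv /=.
by apply/existsP/card_gt0P => -[z gz]; exists z.
Qed.

Lemma two_edge_prob_expect x y : two_edge_prob wL wR u x y =
  E (fun g => (proj_edge g u x && proj_edge g u y)%:R).
Proof.
rewrite /two_edge_prob /expect big_mkcond; apply: eq_bigr => g _.
by case: ifP => _; rewrite ?mulr1 ?mulr0.
Qed.

Variables (x y : 'I_nL).
Hypotheses (ux : u != x) (uy : u != y) (xy : x != y).

(* First-moment upper bound: both projected edges need a common neighbour,
   so the indicator is at most the product of the codegrees. *)
Lemma two_edge_prob_le :
  two_edge_prob wL wR u x y <= pair_mass x * pair_mass y + triple_mass x y.
Proof.
rewrite two_edge_prob_expect.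
apply: le_trans (_ : _ <= E (fun g => codeg x g * codeg y g)) _.
  apply: (ler_expect p01) => g; rewrite !codeg_card !proj_edge_card //.
  by rewrite -natrM ler_nat indicator_le_prod.
have := defect_ge0 x y; rewrite expect_codeg_prod //; lra.
Qed.

(* Second-moment lower bound: the pointwise inequality
   4ab <= 2 [a > 0 /\ b > 0] + a^2 b + a b^2 turns the codegree moments
   into a lower bound on the indicator of the two projected edges. *)
Lemma two_edge_prob_ge (m : R) : 0 <= m -> (forall z, p (u, z) <= m) ->
  (pair_mass x * pair_mass y + triple_mass x y) * (1 - pair_mass x - pair_mass y - 2 * m)
  <= two_edge_prob wL wR u x y.
Proof.
move=> m0 pm.
have sandwich : E (fun g => 4 * (codeg x g * codeg y g)
      - codeg x g ^+ 2 * codeg y g - codeg y g ^+ 2 * codeg x g)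
    <= E (fun g => 2 * (proj_edge g u x && proj_edge g u y)%:R).
  apply: (ler_expect p01) => g; rewrite !codeg_card !proj_edge_card // !expr2.
  move: (indicator_ge_cubic #|[pred z | g (u, z) && g (x, z)]|
                            #|[pred z | g (u, z) && g (y, z)]|).
  rewrite -(ler_nat R) !natrD !natrM; lra.
rewrite !expectB !expectZ expect_codeg_prod // -two_edge_prob_expect in sandwich.
have cubic_x := expect_codeg_cubic ux uy xy.
have yx : y != x by rewrite eq_sym.
have cubic_y := expect_codeg_cubic uy ux yx.
rewrite triple_massC (mulrC (pair_mass y)) in cubic_y.
have defect_small := defect_le x y pm.
have mass_pos : 0 <= pair_mass x * pair_mass y.
  by rewrite mulr_ge0 ?pair_mass_ge0.
have defect_rel : m * triple_mass x y <= m * (pair_mass x * pair_mass y + triple_mass x y).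
  by rewrite ler_wpM2l // lerDr.
lra.
Qed.

End CommonNeighbours.

Section RankOneModel.
Variables (R : realType) (nL nR : nat) (wL : 'I_nL -> R) (wR : 'I_nR -> R).
Hypotheses (nR_gt0 : (0 < nR)%N) (wL_gt0 : forall i, 0 < wL i) (wR_gt0 : forall j, 0 < wR j).
Hypothesis edge_le1 : forall i j, wL i * wR j / (nR%:R * moment wR 1) <= 1.

Definition power_sum (k : nat) : R := \sum_(j < nR) wR j ^+ k.

Lemma power_sum_gt0 k : 0 < power_sum k.
Proof.
rewrite /power_sum (bigD1 (Ordinal nR_gt0)) //= ltr_wpDr ?exprn_gt0 //.
by apply: sumr_ge0 => j _; rewrite exprn_ge0 // ltW.
Qed.

Lemma moment_gt0 k : 0 < moment wR k.
Proof. by rewrite /moment divr_gt0 ?ltr0n //; exact: power_sum_gt0. Qed.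

Lemma power_sumE k : nR%:R * moment wR k = power_sum k.
Proof. by rewrite /moment mulrC divfK // pnatr_eq0 -lt0n. Qed.

(* Assumption 1 makes the truncation at 1 in p_edge inactive. *)
Lemma edge_probE v z : edge_prob wL wR (v, z) = wL v * wR z / power_sum 1.
Proof. by rewrite /edge_prob /p_edge min_l ?edge_le1 // power_sumE. Qed.

Lemma edge_prob01 e : 0 <= edge_prob wL wR e <= 1.
Proof.
case: e => v z; rewrite edge_probE -power_sumE edge_le1 andbT power_sumE.
by rewrite divr_ge0 ?mulr_ge0 ?ltW ?power_sum_gt0.
Qed.

Definition moment_ratio : R := power_sum 2 / power_sum 1 ^+ 2.

Lemma moment_ratio_gt0 : 0 < moment_ratio.
Proof. by rewrite divr_gt0 ?exprn_gt0 ?power_sum_gt0. Qed.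

Lemma moment_ratioE : moment_ratio = moment wR 2 / moment wR 1 ^+ 2 / nR%:R.
Proof.
have n_gt0 : 0 < nR%:R :> R by rewrite ltr0n.
rewrite /moment_ratio -!power_sumE; field.
by rewrite !gt_eqF ?moment_gt0.
Qed.

Lemma pair_massE u v : pair_mass wL wR u v = wL u * wL v * moment_ratio.
Proof.
rewrite /pair_mass /co_prob /moment_ratio {1}/power_sum mulr_suml mulr_sumr; apply: eq_bigr => z _.
rewrite !edge_probE; field; exact: lt0r_neq0 (power_sum_gt0 1).
Qed.

Lemma triple_massE u x y :
  triple_mass wL wR u x y = wL u * wL x * wL y * (power_sum 3 / power_sum 1 ^+ 3).
Proof.
rewrite /triple_mass /co_prob {1}/power_sum mulr_suml mulr_sumr; apply: eq_bigr => z _.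
rewrite !edge_probE; field; exact: lt0r_neq0 (power_sum_gt0 1).
Qed.

Lemma two_edge_approxE u x y : two_edge_approx wL wR u x y
  = pair_mass wL wR u x * pair_mass wL wR u y + triple_mass wL wR u x y.
Proof.
rewrite /two_edge_approx /p_pair !pair_massE triple_massE moment_ratioE -!power_sumE.
have n_gt0 : 0 < nR%:R :> R by rewrite ltr0n.
have := wL_gt0 u; have := moment_gt0 1; have := moment_gt0 2 => M2 M1 wu.
by field; rewrite !gt_eqF.
Qed.

Lemma edge_prob_le_sqrt u z : edge_prob wL wR (u, z) <= Num.sqrt (wL u * wL u * moment_ratio).
Proof.
have [p_ge0 _] := andP (edge_prob01 (u, z)).
have wz_le : wR z ^+ 2 <= power_sum 2.
  rewrite /power_sum (bigD1 z) //= lerDl.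
  by apply: sumr_ge0 => j _; rewrite exprn_ge0 // ltW.
have bound_ge0 : 0 <= wL u * wL u * moment_ratio.
  by apply: ltW; rewrite mulr_gt0 ?moment_ratio_gt0 // mulr_gt0.
rewrite -(ger0_norm p_ge0) -sqrtr_sqr ler_sqrt //.
rewrite edge_probE /moment_ratio -expr2 expr_div_n exprMn mulrA.
by rewrite ler_pM2r ?invr_gt0 ?exprn_gt0 ?power_sum_gt0 // ler_pM2l ?exprn_gt0.
Qed.

Lemma two_edge_ratio_bounds u x y : u != x -> u != y -> x != y ->
  1 - (wL u * wL x * moment_ratio + wL u * wL y * moment_ratio + 2 * Num.sqrt (wL u * wL u * moment_ratio))
  <= two_edge_prob wL wR u x y / two_edge_approx wL wR u x y <= 1.
Proof.
move=> ux uy xy.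
have approx_gt0 : 0 < two_edge_approx wL wR u x y.
  have T_gt0 : 0 < triple_mass wL wR u x y.
    by rewrite triple_massE mulr_gt0 ?divr_gt0 ?exprn_gt0 ?power_sum_gt0 // !mulr_gt0 ?wL_gt0.
  have X_ge0 := pair_mass_ge0 edge_prob01 u x; have Y_ge0 := pair_mass_ge0 edge_prob01 u y.
  by rewrite two_edge_approxE; have := mulr_ge0 X_ge0 Y_ge0; lra.
have upper := two_edge_prob_le edge_prob01 ux uy xy.
have lower := two_edge_prob_ge edge_prob01 ux uy xy (sqrtr_ge0 _) (edge_prob_le_sqrt u).
rewrite -two_edge_approxE !pair_massE in upper lower.
rewrite ler_pdivlMr // ler_pdivrMr // mul1r upper andbT; apply: le_trans lower.
lra.
Qed.

Section SizeBounds.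
Variables (C C2 s : R).
Hypotheses (wL_le : forall i, wL i <= C * s)
           (moment2_le : moment wR 2 <= C2 * moment wR 1 ^+ 2).

Definition mass_bound : R := C ^+ 2 * C2 * (s ^+ 2 / nR%:R).

Lemma weight_ratio_le a b : wL a * wL b * moment_ratio <= mass_bound.
Proof.
have n_gt0 : 0 < nR%:R :> R by rewrite ltr0n.
have ratio_le : moment_ratio <= C2 / nR%:R.
  rewrite moment_ratioE ler_pM2r ?invr_gt0 // ler_pdivrMr //.
  by rewrite exprn_gt0 // moment_gt0.
have wab_le : wL a * wL b <= (C * s) * (C * s).
  by rewrite ler_pM ?wL_le // ltW.
apply: le_trans (ler_wpM2r (ltW moment_ratio_gt0) wab_le) _.
have -> : mass_bound = (C * s) * (C * s) * (C2 / nR%:R) by rewrite /mass_bound; ring.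
by rewrite ler_wpM2l // -expr2 sqr_ge0.
Qed.

Lemma two_edge_ratio_close u x y : u != x -> u != y -> x != y ->
  1 - (2 * mass_bound + 2 * Num.sqrt mass_bound)
  <= two_edge_prob wL wR u x y / two_edge_approx wL wR u x y <= 1.
Proof.
move=> ux uy xy; have /andP[lower ->] := two_edge_ratio_bounds ux uy xy.
rewrite andbT; apply: le_trans lower; rewrite lerD2l lerN2.
have mass_ge0 : 0 <= mass_bound.
  by apply: le_trans (weight_ratio_le u u); rewrite ltW // mulr_gt0 ?moment_ratio_gt0 // mulr_gt0.
have sqrt_le : Num.sqrt (wL u * wL u * moment_ratio) <= Num.sqrt mass_bound.
  by rewrite ler_sqrt // weight_ratio_le.
have := weight_ratio_le u x; have := weight_ratio_le u y; lra.
Qed.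

End SizeBounds.

End RankOneModel.

Lemma small_error (R : realType) (e : R) : 0 < e ->
  exists2 eta : R, 0 < eta & forall t, t < eta -> 2 * t + 2 * Num.sqrt t < e.
Proof.
move=> e_gt0; set q := e / 4.
have q_gt0 : 0 < q by rewrite divr_gt0.
exists (Num.min q (q ^+ 2)) => [|t]; first by rewrite lt_min q_gt0 exprn_gt0.
rewrite lt_min => /andP[t_lt_q t_lt_q2].
have sqrt_lt : Num.sqrt t < q.
  have [t_le0 | t_gt0] := lerP t 0; first by rewrite ler0_sqrtr.
  by rewrite -(gtr0_norm q_gt0) -sqrtr_sqr ltr_sqrt // exprn_gt0.
rewrite /q in t_lt_q sqrt_lt; lra.
Qed.

Lemma scaled_powR_small (R : realType) (K a eta : R) : 0 < a -> 0 < eta ->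
  exists N : nat, forall n : nat, (N <= n)%N -> K * n%:R `^ (- a) < eta.
Proof.
move=> a_gt0 eta_gt0.
set eps := eta / (`|K| + 1).
have eps_gt0 : 0 < eps by rewrite divr_gt0 // ltr_wpDl.
set B := eps^-1 `^ a^-1.
exists (Num.Def.archi_bound B) => n Nn.
have B_lt_n : B < n%:R.
  by apply: lt_le_trans (archi_boundP (powR_ge0 _ _)) _; rewrite ler_nat.
have n_gt0 : 0 < n%:R :> R by apply: le_lt_trans B_lt_n; exact: powR_ge0.
have pow_gt : eps^-1 < n%:R `^ a.
  have := gt0_ltr_powR a_gt0 (powR_ge0 _ _ : B \in Num.nneg) _ B_lt_n.
  rewrite /B -powRrM mulVf ?gt_eqF // powRr1 ?invr_ge0 ?ltW //.
  by apply; rewrite nnegrE ltW.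
have pow_small : n%:R `^ (- a) < eps.
  by rewrite powRN -[eps]invrK ltf_pV2 ?posrE ?invr_gt0 ?powR_gt0.
apply: le_lt_trans (ler_wpM2r (powR_ge0 _ _) (ler_norm K)) _.
apply: le_lt_trans (ler_wpM2l (normr_ge0 K) (ltW pow_small)) _.
by rewrite /eps mulrA ltr_pdivrMr ?ltr_wpDl //; lra.
Qed.

Lemma sqr_powR_div (R : realType) (delta : R) (n : nat) : (0 < n)%N ->
  (n%:R `^ (2^-1 - delta)) ^+ 2 / n%:R = n%:R `^ (- (2 * delta)) :> R.
Proof.
move=> n_gt0; have x_gt0 : 0 < n%:R :> R by rewrite ltr0n.
rewrite -powR_mulrn ?powR_ge0 // -powRrM -{2}(powRr1 (ltW x_gt0)).
rewrite -powRB; last by rewrite (gt_eqF x_gt0) implybT.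
by congr (_ `^ _); rewrite mulrBl mulVf ?pnatr_eq0 //; ring.
Qed.

(* Main theorem.  Only n_R -> oo, positivity, Assumption 1, the bound on
   the left weights and M_R2 = O(M_R1^2) are used, with any delta > 0: the
   relative error is O(n_R^(-delta)). *)
Theorem mainTheorem7 (R : realType) (delta : R) (hdelta : 1 / 10%:R < delta)
  (nL nR : nat -> nat)
  (wL : forall k, 'I_(nL k) -> R) (wR : forall k, 'I_(nR k) -> R)
  (u u1 u2 : forall k, 'I_(nL k)) :
  (* n_L, n_R -> infinity along the sequence of instances *)
  (forall N : nat, exists K : nat, forall k : nat, (K <= k)%N -> (N <= nL k)%N) ->
  (forall N : nat, exists K : nat, forall k : nat, (K <= k)%N -> (N <= nR k)%N) ->
  (* positive weights *)
  (forall k i, 0 < wL k i) -> (forall k j, 0 < wR k j) ->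
  (* Assumption 1 *)
  (forall k i j, wL k i * wR k j / ((nR k)%:R * moment (wR k) 1) <= 1) ->
  (* Assumption 2 *)
  (exists C : R, exists K : nat, forall k : nat, (K <= k)%N ->
      (forall i, wL k i <= C * (nR k)%:R `^ (2^-1 - delta)) /\
      (forall j, wR k j <= C * (nR k)%:R `^ (2^-1 - delta))) ->
  (exists c : R, 0 < c /\ exists K : nat, forall k : nat, (K <= k)%N ->
      forall i, c <= wL k i) ->
  (exists C : R, exists K : nat, forall k : nat, (K <= k)%N ->
      moment (wR k) 2 <= C * (moment (wR k) 1) ^+ 2) ->
  (exists C : R, exists K : nat, forall k : nat, (K <= k)%N ->
      moment (wR k) 4 <= C * (nR k)%:R `^ (1 - 2%:R * delta)) ->
  (* u, u1, u2 distinct *)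
  (forall k, [/\ u k != u1 k, u k != u2 k & u1 k != u2 k]) ->
  (fun k => two_edge_prob (wL k) (wR k) (u k) (u1 k) (u2 k)
            / two_edge_approx (wL k) (wR k) (u k) (u1 k) (u2 k)) @ \oo --> (1 : R).
Proof.
move=> _ nR_large wL_gt0 wR_gt0 edge_le1 [C [Kw w_le]] _ [C2 [Km moment2_le]] _ distinct.
have two_delta_gt0 : 0 < 2 * delta.
  by rewrite mulr_gt0 //; apply: lt_trans hdelta; rewrite divr_gt0 ?ltr0n.
apply/cvgrPdist_lt => e e_gt0.
have [eta eta_gt0 error_small] := small_error e_gt0.
have [N pow_small] := scaled_powR_small (C ^+ 2 * C2) two_delta_gt0 eta_gt0.
have [Kn n_large] := nR_large N.+1.
exists (maxn Kw (maxn Km Kn)) => // k /= k_large.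
have [k_w k_m k_n] : [/\ (Kw <= k)%N, (Km <= k)%N & (Kn <= k)%N] by split; lia.
have n_ge := n_large k k_n; have n_gt0 : (0 < nR k)%N by lia.
have [wL_le _] := w_le k k_w.
have [ux uy xy] := distinct k.
have := two_edge_ratio_close n_gt0 (wL_gt0 k) (wR_gt0 k) (edge_le1 k)
  wL_le (moment2_le k k_m) ux uy xy.
rewrite /mass_bound sqr_powR_div // => /andP[lower upper].
have := error_small _ (pow_small _ (ltnW n_ge)).
by rewrite ger0_norm ?subr_ge0 //; lra.
Qed.
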